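(* Let $q>0$ with $q\ne 1$, let $t\ge 0$, and set $$A=\begin{pmatrix} q & \sqrt t\\ 0 & -1\end{pmatrix},\qquad B=\begin{pmatrix} q & 0\\ -\sqrt t & -1\end{pmatrix}.$$ Then $$\|AB-qBA\|_F^2=t^2(1+q^2)+2t(1+q)(1+q^3)+(1-q)^2(1+q^4).$$ Let $f(t)=\|AB-qBA\|_F^2/(\|A\|_F^2\|B\|_F^2)$. On $t\ge 0$, $f$ attains its maximum at $t_{\max}=\frac{3q^4+2q^2+3}{(1-q)^2}$, where $$f(t_{\max})=\frac{1-h(q)x(q)}{1-x(q)}\,(1+q^2),\qquad x(q)=\frac{q(1-q)^2}{2(1+q^4)},\quad h(q)=\frac{(1+q)^2}{2(1+q^2)}.$$ Moreover $f(t_{\max})>1+q^2$. Consequently, for every $q>0$ with $q\neq 1$, there exist $A,B\in M_2(\mathbb{C})$ with $\|AB-qBA\|_F^2>(1+q^2)\|A\|_F^2\|B\|_F^2$.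
   Context: $\|X\|_F=\sqrt{\operatorname{tr}(XX^\dagger)}$ denotes the Frobenius norm. *)

From HB Require Import structures.
From mathcomp Require Import all_boot all_order all_algebra.
From mathcomp Require Import complex.
Set Implicit Arguments. Unset Strict Implicit. Unset Printing Implicit Defensive.
Import Order.TTheory GRing.Theory Num.Theory.
Local Open Scope ring_scope.
Local Open Scope complex_scope.

Definition adjmx (R : rcfType) m n (X : 'M[R[i]]_(m, n)) : 'M[R[i]]_(n, m) :=
  (map_mx (@conjc R) X)^T.

(* Frobenius norm ||X||_F = sqrt(tr(X X^dagger)); tr(X X^dagger) is real, we take its real part. *)
Definition frob (R : rcfType) m n (X : 'M[R[i]]_(m, n)) : R :=
  Num.sqrt (complex.Re (\tr (X *m adjmx X))).

Definition matA (R : rcfType) (q t : R) : 'M[R[i]]_2 :=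
  \matrix_(i < 2, j < 2)
    (if (val i == 0%N) && (val j == 0%N) then q%:C
     else if (val i == 0%N) && (val j == 1%N) then (Num.sqrt t)%:C
     else if (val i == 1%N) && (val j == 1%N) then (-1)%:C
     else 0).

Definition matB (R : rcfType) (q t : R) : 'M[R[i]]_2 :=
  \matrix_(i < 2, j < 2)
    (if (val i == 0%N) && (val j == 0%N) then q%:C
     else if (val i == 1%N) && (val j == 0%N) then (- Num.sqrt t)%:C
     else if (val i == 1%N) && (val j == 1%N) then (-1)%:C
     else 0).

Definition qcomm (R : rcfType) n (q : R) (A B : 'M[R[i]]_n) : 'M[R[i]]_n :=
  A *m B - q%:C *: (B *m A).

Definition fratio (R : rcfType) (q t : R) : R :=
  frob (qcomm q (matA q t) (matB q t)) ^+ 2 /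
  (frob (matA q t) ^+ 2 * frob (matB q t) ^+ 2).

Definition tmax (R : rcfType) (q : R) : R :=
  (3 * q ^+ 4 + 2 * q ^+ 2 + 3) / (1 - q) ^+ 2.
Definition xq (R : rcfType) (q : R) : R := q * (1 - q) ^+ 2 / (2 * (1 + q ^+ 4)).
Definition hq (R : rcfType) (q : R) : R := (1 + q) ^+ 2 / (2 * (1 + q ^+ 2)).

From HB Require Import structures.
From mathcomp Require Import all_boot all_order all_algebra.
From mathcomp Require Import complex.
From mathcomp Require Import ring lra.
Import Order.TTheory GRing.Theory Num.Theory.
Set Implicit Arguments. Unset Strict Implicit. Unset Printing Implicit Defensive.
Local Open Scope ring_scope.
Local Open Scope complex_scope.

(* Reading the Frobenius norms off the entries gives
   f(t) = N(t) / (q^2 + t + 1)^2 with N the quadratic of the first claim. With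
   dq = 2 (1 + q^4) (1 - xq q) > 0 and fmax = (1 + q^2) + q (1 - q)^4 / (2 dq),
   one has the exact identity
     fmax (q^2 + t + 1)^2 - N(t) = 2 q dq (1 - (q^2 + t + 1) / (q^2 + tmax + 1))^2,
   so f <= fmax on t >= 0 with equality at t = tmax, and fmax > 1 + q^2 because
   q (1 - q)^4 > 0. *)

Section Frobenius.
Variable R : rcfType.

Definition sqnormc (z : R[i]) : R := complex.Re z ^+ 2 + complex.Im z ^+ 2.

Lemma sqnormc_ge0 (z : R[i]) : 0 <= sqnormc z.
Proof. by rewrite addr_ge0 ?sqr_ge0. Qed.

Lemma Re_mulc_conjc (z : R[i]) : complex.Re (z * conjc z) = sqnormc z.
Proof. by case: z => a b; rewrite /sqnormc /=; ring. Qed.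

Lemma Re_sum (I : Type) (r : seq I) (P : pred I) (F : I -> R[i]) :
  complex.Re (\sum_(i <- r | P i) F i) = \sum_(i <- r | P i) complex.Re (F i).
Proof. by apply: (big_morph (@complex.Re R)) => [[a b] [c d]|]. Qed.

Lemma frob_sqr m n (X : 'M[R[i]]_(m, n)) :
  frob X ^+ 2 = \sum_i \sum_j sqnormc (X i j).
Proof.
have ReE : complex.Re (\tr (X *m adjmx X)) = \sum_i \sum_j sqnormc (X i j).
  rewrite /mxtrace Re_sum; apply: eq_bigr => i _.
  rewrite mxE Re_sum; apply: eq_bigr => j _.
  by rewrite !mxE Re_mulc_conjc.
rewrite /frob ReE sqr_sqrtr //.
by apply: sumr_ge0 => i _; apply: sumr_ge0 => j _; exact: sqnormc_ge0.
Qed.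

Lemma frob_sqr_mx2 (X : 'M[R[i]]_2) :
  frob X ^+ 2 = sqnormc (X 0 0) + sqnormc (X 0 1) + sqnormc (X 1 0) + sqnormc (X 1 1).
Proof.
rewrite frob_sqr !big_ord_recr !big_ord0 /= !add0r addrA.
have -> : widen_ord (leqnSn 1) ord_max = 0 :> 'I_2 by apply: val_inj.
by have -> : ord_max = 1 :> 'I_2 by apply: val_inj.
Qed.

End Frobenius.

Definition qcomm_norm2 (R : rcfType) (q t : R) : R :=
  t ^+ 2 * (1 + q ^+ 2) + 2 * t * (1 + q) * (1 + q ^+ 3)
  + (1 - q) ^+ 2 * (1 + q ^+ 4).

Section ExampleMatrices.
Variables (R : rcfType) (q t : R).
Hypothesis t_ge0 : 0 <= t.

Let sqrt_tK : Num.sqrt t ^+ 2 = t. Proof. exact: sqr_sqrtr. Qed.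

Lemma frob_matA : frob (matA q t) ^+ 2 = q ^+ 2 + t + 1.
Proof.
rewrite frob_sqr_mx2 !mxE /sqnormc /=.
by move: sqrt_tK; move: (Num.sqrt t) => s <-; ring.
Qed.

Lemma frob_matB : frob (matB q t) ^+ 2 = q ^+ 2 + t + 1.
Proof.
rewrite frob_sqr_mx2 !mxE /sqnormc /=.
by move: sqrt_tK; move: (Num.sqrt t) => s <-; ring.
Qed.

Lemma frob_qcomm_matAB : frob (qcomm q (matA q t) (matB q t)) ^+ 2 = qcomm_norm2 q t.
Proof.
rewrite frob_sqr_mx2 /qcomm !mxE !big_ord_recr !big_ord0 /= !mxE /sqnormc /qcomm_norm2 /=.
by move: sqrt_tK; move: (Num.sqrt t) => s <-; ring.
Qed.

Lemma fratioE : fratio q t = qcomm_norm2 q t / (q ^+ 2 + t + 1) ^+ 2.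
Proof. by rewrite /fratio frob_qcomm_matAB frob_matA frob_matB -expr2. Qed.

End ExampleMatrices.

Lemma tmax_ge0 (R : rcfType) (q : R) : 0 <= tmax q.
Proof. by rewrite divr_ge0 ?sqr_ge0 //; nra. Qed.

Section Maximum.
Variables (R : rcfType) (q : R).

Definition dq : R := 2 - q + 2 * q ^+ 2 - q ^+ 3 + 2 * q ^+ 4.

Definition fratio_max : R := (1 - hq q * xq q) / (1 - xq q) * (1 + q ^+ 2).

Lemma dq_gt0 : 0 < dq.
Proof. rewrite /dq; nra. Qed.

Lemma fratio_maxE : fratio_max = 1 + q ^+ 2 + q * (1 - q) ^+ 4 / (2 * dq).
Proof.
rewrite /fratio_max /hq /xq /dq; field.
by rewrite -/dq !gt_eqF ?dq_gt0 //; nra.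
Qed.

Lemma fratio_max_sub_qcomm_norm2 (t : R) :
  fratio_max * (q ^+ 2 + t + 1) ^+ 2 - qcomm_norm2 q t
  = 2 * q * dq * (1 - (1 - q) ^+ 2 / (2 * dq) * (q ^+ 2 + t + 1)) ^+ 2.
Proof.
rewrite fratio_maxE /qcomm_norm2 /dq; field.
by rewrite -/dq gt_eqF ?dq_gt0.
Qed.

Lemma fratio_le_max (t : R) : 0 <= q -> 0 <= t -> fratio q t <= fratio_max.
Proof.
move=> q_ge0 t_ge0; rewrite fratioE // ler_pdivrMr; last by rewrite exprn_gt0 //; nra.
rewrite -subr_ge0 fratio_max_sub_qcomm_norm2.
by rewrite mulr_ge0 ?sqr_ge0 // !mulr_ge0 ?ler0n ?(ltW dq_gt0).
Qed.

Hypothesis q_neq1 : q != 1.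

Let subq_neq0 : 1 - q != 0. Proof. by rewrite subr_eq0 eq_sym. Qed.

Lemma tmax_shiftE : q ^+ 2 + tmax q + 1 = 2 * dq / (1 - q) ^+ 2.
Proof. by rewrite /tmax /dq; field. Qed.

Lemma fratio_max_gt : 0 < q -> 1 + q ^+ 2 < fratio_max.
Proof.
move=> q_gt0; rewrite fratio_maxE ltrDl.
by rewrite divr_gt0 ?(mulr_gt0 q_gt0) ?exprn_even_gt0 ?mulr_gt0 ?dq_gt0.
Qed.

Lemma fratio_tmax : fratio q (tmax q) = fratio_max.
Proof.
rewrite fratioE ?tmax_ge0 // tmax_shiftE fratio_maxE /qcomm_norm2 /tmax /dq.
by field; rewrite -/dq gt_eqF ?dq_gt0.
Qed.

End Maximum.

Theorem mainTheorem4 (R : rcfType) (q : R) (hq0 : 0 < q) (hq1 : q != 1) :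
  (forall t : R, 0 <= t ->
     frob (qcomm q (matA q t) (matB q t)) ^+ 2 =
       t ^+ 2 * (1 + q ^+ 2) + 2 * t * (1 + q) * (1 + q ^+ 3)
       + (1 - q) ^+ 2 * (1 + q ^+ 4))
  /\ 0 <= tmax q
  /\ (forall t : R, 0 <= t -> fratio q t <= fratio q (tmax q))
  /\ fratio q (tmax q) = (1 - hq q * xq q) / (1 - xq q) * (1 + q ^+ 2)
  /\ fratio q (tmax q) > 1 + q ^+ 2
  /\ (exists A B : 'M[R[i]]_2,
        frob (qcomm q A B) ^+ 2 > (1 + q ^+ 2) * frob A ^+ 2 * frob B ^+ 2).
Proof.
have fmax := fratio_tmax hq1.
split; first exact: frob_qcomm_matAB.
split; first exact: tmax_ge0.
split; first by move=> t t_ge0; rewrite fmax fratio_le_max // ltW.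
split; first exact: fmax.
split; first by rewrite fmax fratio_max_gt.
exists (matA q (tmax q)), (matB q (tmax q)).
have norms_gt0 : 0 < frob (matA q (tmax q)) ^+ 2 * frob (matB q (tmax q)) ^+ 2.
  by rewrite frob_matA ?frob_matB ?tmax_ge0 // mulr_gt0 //; have := tmax_ge0 q; nra.
by rewrite -mulrA -ltr_pdivlMr // -/(fratio q (tmax q)) fmax fratio_max_gt.
Qed.
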